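(* For every $m \in \mathbb{N}$ and every $c \geq 0$, the eigenvalues of the $2m\times 2m$ matrix $\tilde{H}_c(m) = \begin{bmatrix} \tilde{A} + 2cI & \tilde{B} \\ \tilde{B}^* & \hat{A} - 2cI \end{bmatrix}$ come in plus/minus pairs (including multiplicity) and $(-2|c - 1|,2|c - 1|) \cap \sigma(\tilde{H}_c(m)) =\emptyset$. Moreover $(-2|c - 1|,2|c - 1|)$ is the largest interval around zero with this property, i.e. it is the stable spectral gap of $\tilde{H}_c$: in particular it contains no spurious eigenvalues whatsoever.
   Context: Here $\tilde A,\tilde B,\hat A$ are real $m\times m$ tridiagonal matrices: $\tilde A$ has all super- and subdiagonal entries $1$ and diagonal $(1,0,\dots,0,-1)$; $\tilde B$ has superdiagonal entries $1$, subdiagonal entries $-1$ and diagonal $(1,0,\dots,0,1)$; $\hat A$ has all super- and subdiagonal entries $-1$ and diagonal $(1,0,\dots,0,-1)$. Equivalently, $\tilde H_c = U\tilde K_c U$ with $U=\frac{1}{\sqrt2}\begin{bmatrix} I & I\\ I & -I\end{bmatrix}$ and $\tilde K_c = 2\begin{bmatrix} e_me_m^T & T_c\\ T_c^* & -e_1e_1^T\end{bmatrix}$, where $T_c$ is the $m\times m$ lower bidiagonal matrix with diagonal entries $c$ and subdiagonal entries $1$, and $e_1,\dots,e_m$ is the canonical basis. $\tilde H_c$ is a low-rank boundary modification of $H_c(2m)=\begin{bmatrix} A+2cI & B\\ -B & -A-2cI\end{bmatrix}$, where $A$ is tridiagonal with zero diagonal and ones off the diagonal and $B$ is tridiagonal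 with zero diagonal, superdiagonal $1$ and subdiagonal $-1$. An interval around zero is called a stable spectral gap if it is disjoint from $\sigma(\tilde H_c(m))$ for all $m$ and is the largest such interval. *)

From HB Require Import structures.
From mathcomp Require Import all_boot all_order all_algebra.
From mathcomp Require Import reals.
From mathcomp Require Import complex.
Set Implicit Arguments. Unset Strict Implicit. Unset Printing Implicit Defensive.
Import Order.TTheory GRing.Theory Num.Theory.
Local Open Scope ring_scope.

Section Mats.
Variable R : realType.
Variable m : nat.

(* boundary diagonal pattern (1,0,...,0,-1); contributions of e_1 and e_m
   add up (relevant only when m = 1) *)
Definition dminus (i : 'I_m) : R := (i == 0%N :> nat)%:R - (i == m.-1 :> nat)%:R.
Definition dplus (i : 'I_m) : R := (i == 0%N :> nat)%:R + (i == m.-1 :> nat)%:R.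

Definition Atil : 'M[R]_m := \matrix_(i, j)
  if (j == i.+1 :> nat) || (i == j.+1 :> nat) then 1
  else if i == j then dminus i else 0.

Definition Btil : 'M[R]_m := \matrix_(i, j)
  if (j == i.+1 :> nat) then 1
  else if (i == j.+1 :> nat) then -1
  else if i == j then dplus i else 0.

Definition Ahat : 'M[R]_m := \matrix_(i, j)
  if (j == i.+1 :> nat) || (i == j.+1 :> nat) then -1
  else if i == j then dminus i else 0.

(* tilde H_c(m) = [[Atil + 2c I, Btil], [Btil^*, Ahat - 2c I]]  (real entries,
   so Btil^* = Btil^T) *)
Definition Htil (c : R) : 'M[R]_(m + m) :=
  block_mx (Atil + (2 * c)%:M) Btil (Btil^T) (Ahat - (2 * c)%:M).

Definition HtilC (c : R) : 'M[R[i]]_(m + m) :=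
  map_mx (fun x => (x%:C)%C) (Htil c).
End Mats.

From HB Require Import structures.
From mathcomp Require Import all_boot all_order all_algebra.
From mathcomp Require Import reals complex trigo.
From mathcomp Require Import zify ring lra.
Set Implicit Arguments. Unset Strict Implicit. Unset Printing Implicit Defensive.
Import Order.TTheory GRing.Theory Num.Theory.
Local Open Scope ring_scope.

(* Write [Atil], [Btil], [Ahat] in terms of the shift [S] and the corner
   projections [E] = e_1 e_1^T, [L] = e_m e_m^T.  Then [Htil_c ^+ 2] is block
   diagonal with blocks [(4 + 4 c^2) + 4 c Atil] and [(4 + 4 c^2) - 4 c Ahat],
   and [P = [[0, J], [-J, 0]]], built from the exchange matrix [J],
   anticommutes with [Htil_c] and squares to [-1].  The anticommutation makes
   the characteristic polynomial even, which pairs the eigenvalues.  As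
   [Atil + 2] and [2 - Ahat] are Gram matrices, [Htil_c ^+ 2 >= 4 (c - 1)^2]
   when [c >= 0]: this is the gap.  Conversely [Atil] has the eigenvector
   [((-1)^k sin ((k + 1/2) phi))_k] with [phi = pi / (2 m)] and eigenvalue
   [- 2 cos phi], so [Htil_c ^+ 2] has the eigenvalue
   [4 (c - 1)^2 + 8 c (1 - cos phi)], which tends to [4 (c - 1)^2]; by the
   pairing, both of its square roots are eigenvalues of [Htil_c]. *)

Lemma sum_supported_at (V : nmodType) m n (F : 'I_m -> V) :
  (forall k : 'I_m, k != n :> nat -> F k = 0) -> \sum_k F k = oapp F 0 (insub n).
Proof.
move=> F0; case: insubP => [k _ kn|nm] /=.
  rewrite (bigD1 k) //= big1 ?addr0 // => j jk; apply: F0.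
  by rewrite -kn; apply: contra jk => /eqP e; apply/eqP/val_inj.
by rewrite big1 // => k _; apply: F0; apply: contra nm => /eqP <-.
Qed.

Ltac nat_cases :=
  intros; rewrite -?val_eqE /=;
  repeat match goal with
  | |- context [ ?a == ?b ] => case: (a =P b) => ?
  | |- context [ (?a < ?b)%N ] => case: (ltnP a b) => ?
  end;
  rewrite /= ?(mul0r, mulr0, mul1r, mulr1, addr0, add0r, subr0, sub0r, subrr, oppr0) //;
  exfalso; lia.

Ltac sum_at n := rewrite (@sum_supported_at _ _ n);
  [ let k := fresh "k" in let kE := fresh "kE" in
    case: insubP => [k _ /= kE|?] /=;
    [rewrite ?mxE ?kE; have := ltn_ord k; try nat_cases | rewrite ?mxE; try nat_cases]
  | let k := fresh "k" in move=> k ?; rewrite ?mxE; have := ltn_ord k; nat_cases ].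

Ltac entrywise := apply/matrixP => i j; rewrite !mxE; have := ltn_ord i; have := ltn_ord j.

Section ShiftMatrices.
Variables (R : pzRingType) (m : nat).

Definition shift_mx : 'M[R]_m := \matrix_(i < m, j < m) (j == i.+1 :> nat)%:R.
Definition first_mx : 'M[R]_m := \matrix_(i < m, j < m) ((i == 0 :> nat) && (j == 0 :> nat))%:R.
Definition last_mx : 'M[R]_m := \matrix_(i < m, j < m) ((i == m.-1 :> nat) && (j == m.-1 :> nat))%:R.
Definition exchange_mx : 'M[R]_m := \matrix_(i < m, j < m) ((i + j)%N == m.-1)%:R.

Local Notation S := shift_mx.
Local Notation E := first_mx.
Local Notation L := last_mx.
Local Notation J := exchange_mx.

Lemma shift_mul_tr : S *m S^T = 1%:M - L.
Proof. by entrywise; sum_at i.+1. Qed.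

Lemma tr_shift_mul : S^T *m S = 1%:M - E.
Proof. by entrywise; sum_at i.-1. Qed.

Lemma shift_mul_first : S *m E = 0.
Proof. by entrywise; sum_at i.+1. Qed.

Lemma first_mul_tr_shift : E *m S^T = 0.
Proof. by entrywise; sum_at 0%N. Qed.

Lemma last_mul_shift : L *m S = 0.
Proof. by entrywise; sum_at m.-1. Qed.

Lemma tr_shift_mul_last : S^T *m L = 0.
Proof. by entrywise; sum_at i.-1. Qed.

Lemma first_mx_idem : E *m E = E.
Proof. by entrywise; sum_at 0%N. Qed.

Lemma last_mx_idem : L *m L = L.
Proof. by entrywise; sum_at m.-1. Qed.

Lemma tr_first_mx : E^T = E.
Proof. by entrywise; nat_cases. Qed.

Lemma tr_last_mx : L^T = L.
Proof. by entrywise; nat_cases. Qed.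

Lemma exchange_mxK : J *m J = 1%:M.
Proof. by entrywise; sum_at (m.-1 - i)%N. Qed.

Lemma exchange_shift : J *m S = S^T *m J.
Proof. by entrywise; sum_at (m.-1 - i)%N; sum_at i.-1. Qed.

Lemma exchange_tr_shift : J *m S^T = S *m J.
Proof. by entrywise; sum_at (m.-1 - i)%N; sum_at i.+1. Qed.

Lemma exchange_first : J *m E = L *m J.
Proof. by entrywise; sum_at (m.-1 - i)%N; sum_at m.-1. Qed.

Lemma exchange_last : J *m L = E *m J.
Proof. by entrywise; sum_at (m.-1 - i)%N; sum_at 0%N. Qed.

Lemma row_mul_shift (f : nat -> R) :
  (\row_(k < m) f k) *m S = \row_(k < m) ((0 < k)%:R * f k.-1).
Proof. by apply/rowP => j; rewrite !mxE; have := ltn_ord j; sum_at j.-1. Qed.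

Lemma row_mul_tr_shift (f : nat -> R) :
  (\row_(k < m) f k) *m S^T = \row_(k < m) ((k.+1 < m)%:R * f k.+1).
Proof. by apply/rowP => j; rewrite !mxE; have := ltn_ord j; sum_at j.+1. Qed.

Lemma row_mul_first (f : nat -> R) :
  (\row_(k < m) f k) *m E = \row_(k < m) ((k == 0 :> nat)%:R * f 0%N).
Proof. by apply/rowP => j; rewrite !mxE; have := ltn_ord j; sum_at 0%N. Qed.

Lemma row_mul_last (f : nat -> R) :
  (\row_(k < m) f k) *m L = \row_(k < m) ((k == m.-1 :> nat)%:R * f m.-1).
Proof. by apply/rowP => j; rewrite !mxE; have := ltn_ord j; sum_at m.-1. Qed.

End ShiftMatrices.

(* [shift_normalize] reduces products of [S], [S^T], [E], [L] and [J] with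
   the relations above; the identities left over hold with the remaining
   products treated as independent atoms, which [mx_ring] checks entrywise. *)
Ltac shift_normalize :=
  rewrite ?linearD ?linearB ?linearN /= ?trmxK ?tr_first_mx ?tr_last_mx ?trmx1
    ?mulmxDl ?mulmxDr ?mulmxBl ?mulmxBr ?mulmxN ?mulNmx ?opprK
    ?shift_mul_tr ?tr_shift_mul ?shift_mul_first ?first_mul_tr_shift
    ?last_mul_shift ?tr_shift_mul_last ?first_mx_idem ?last_mx_idem
    ?mulmxDl ?mulmxDr ?mulmxBl ?mulmxBr ?mul1mx ?mulmx1
    ?exchange_shift ?exchange_tr_shift ?exchange_first ?exchange_last.

Ltac mx_ring :=
  repeat match goal with |- context [?X *m ?Y] => let Z := fresh "P" in move: (X *m Y) => Z end;
  apply/matrixP => ? ?; rewrite !mxE; ring.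

Section TildeMatrices.
Variables (R : realType) (m : nat).

Local Notation S := (shift_mx R m).
Local Notation E := (first_mx R m).
Local Notation L := (last_mx R m).
Local Notation J := (exchange_mx R m).
Local Notation A := (Atil R m).
Local Notation B := (Btil R m).
Local Notation Ah := (Ahat R m).

Lemma Atil_shiftE : A = S + S^T + E - L.
Proof. by rewrite /Atil /dminus; entrywise; nat_cases. Qed.

Lemma Btil_shiftE : B = S - S^T + E + L.
Proof. by rewrite /Btil /dplus; entrywise; nat_cases. Qed.

Lemma Ahat_shiftE : Ah = - (S + S^T) + E - L.
Proof. by rewrite /Ahat /dminus; entrywise; nat_cases. Qed.

Lemma tr_Atil : A^T = A.
Proof. by rewrite Atil_shiftE; shift_normalize; mx_ring. Qed.

Lemma tr_Ahat : Ah^T = Ah.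
Proof. by rewrite Ahat_shiftE; shift_normalize; mx_ring. Qed.

Lemma Atil_sqr_add : A *m A + B *m B^T = 4%:M.
Proof. by rewrite Atil_shiftE Btil_shiftE; shift_normalize; mx_ring. Qed.

Lemma Ahat_sqr_add : B^T *m B + Ah *m Ah = 4%:M.
Proof. by rewrite Ahat_shiftE Btil_shiftE; shift_normalize; mx_ring. Qed.

Lemma Atil_Btil_Ahat : A *m B + B *m Ah = 0.
Proof. by rewrite Atil_shiftE Btil_shiftE Ahat_shiftE; shift_normalize; mx_ring. Qed.

Lemma exchange_Atil : J *m A = - (Ah *m J).
Proof. by rewrite Atil_shiftE Ahat_shiftE; shift_normalize; mx_ring. Qed.

Lemma exchange_Ahat : J *m Ah = - (A *m J).
Proof. by rewrite Atil_shiftE Ahat_shiftE; shift_normalize; mx_ring. Qed.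

Lemma exchange_Btil : J *m B = B^T *m J.
Proof. by rewrite Btil_shiftE; shift_normalize; mx_ring. Qed.

Lemma exchange_tr_Btil : J *m B^T = B *m J.
Proof. by rewrite Btil_shiftE; shift_normalize; mx_ring. Qed.

Lemma Atil_add2_gram : A + 2%:M = (1%:M + S) *m (1%:M + S)^T + E *m E^T.
Proof. by rewrite Atil_shiftE; shift_normalize; mx_ring. Qed.

Lemma Ahat_sub2_gram : 2%:M - Ah = (1%:M + S^T) *m (1%:M + S^T)^T + L *m L^T.
Proof. by rewrite Ahat_shiftE; shift_normalize; mx_ring. Qed.

Definition pairing_mx : 'M[R]_(m + m) := block_mx 0 J (- J) 0.

Lemma pairing_mx_sqr : pairing_mx *m pairing_mx = - 1%:M.
Proof.
rewrite mulmx_block !(mulmxN, mulNmx, mul0mx, mulmx0) exchange_mxK.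
by rewrite (scalar_mx_block m m) opp_block_mx; congr block_mx; mx_ring.
Qed.

Lemma pairing_mx_anticomm c : pairing_mx *m Htil m c = - (Htil m c *m pairing_mx).
Proof.
rewrite /Htil !mulmx_block opp_block_mx.
rewrite !(mulmxDl, mulmxDr, mulmxBl, mulmxBr, mulmxN, mulNmx, mul0mx, mulmx0,
  mul_mx_scalar, mul_scalar_mx, linearZ) /=.
rewrite exchange_Atil exchange_Ahat exchange_Btil exchange_tr_Btil.
by congr block_mx; mx_ring.
Qed.

Lemma Htil_sqr c : Htil m c *m Htil m c =
  block_mx ((4 + 4 * c ^+ 2)%:M + (4 * c) *: A) 0 0 ((4 + 4 * c ^+ 2)%:M - (4 * c) *: Ah).
Proof.
have BBt : B *m B^T = 4%:M - A *m A by rewrite -Atil_sqr_add addrC addKr.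
have BtB : B^T *m B = 4%:M - Ah *m Ah by rewrite -Ahat_sqr_add addrK.
have BAh : B *m Ah = - (A *m B) by apply/eqP; rewrite -addr_eq0 addrC Atil_Btil_Ahat.
have AhBt : Ah *m B^T = - (B^T *m A).
  by rewrite -tr_Ahat -trmx_mul -[in RHS]tr_Atil -trmx_mul -linearN /= -BAh.
rewrite /Htil !mulmx_block.
rewrite !(mulmxDl, mulmxDr, mulmxBl, mulmxBr, mulmxN, mulNmx, mul0mx, mulmx0,
  mul_mx_scalar, mul_scalar_mx) BBt BtB BAh AhBt ?scale_scalar_mx.
by congr block_mx; mx_ring.
Qed.

End TildeMatrices.

Section EvenCharPoly.
Variable F : fieldType.

Lemma mup_even_poly (p : {poly F}) (lam : F) :
  p != 0 -> p \Po (- 'X) = p -> mup lam p = mup (- lam) p.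
Proof.
move=> p0 p_even.
suff mup_le l : (mup l p <= mup (- l) p)%N.
  by apply/eqP; rewrite eqn_leq mup_le -{2}(opprK lam) mup_le.
rewrite mup_geq //.
have dvd_p : ('X - l%:P) ^+ mup l p %| p by rewrite -mup_geq.
have := dvdp_comp_poly (- 'X) dvd_p.
rewrite p_even rmorphXn /= comp_polyB comp_polyX comp_polyC.
have -> : - 'X - l%:P = - ('X - (- l)%:P) :> {poly F} by rewrite polyCN opprD opprK.
by rewrite exprNn; apply: dvdp_trans; apply: dvdp_mull.
Qed.

(* An invertible [P] with [P M = - M P] conjugates [M] to [- M], and
   [char_poly (- M)] is [char_poly M \Po (- 'X)] up to the sign [(-1) ^+ n]. *)
Lemma char_poly_even n (M P : 'M[F]_n) :
  P *m M = - (M *m P) -> P \in unitmx -> ~~ odd n ->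
  char_poly M \Po (- 'X) = char_poly M.
Proof.
move=> PM P_unit n_even.
have -> : char_poly M \Po (- 'X) = \det (- char_poly_mx (- M)).
  rewrite /char_poly -det_map_mx; congr (\det _); apply/matrixP => i j.
  rewrite !mxE /=; case: (i == j) => /=;
  rewrite ?mulr1n ?mulr0n ?comp_polyB ?comp_polyX ?comp_polyC ?comp_poly0 ?polyCN; ring.
rewrite -scaleN1r detZ -signr_odd (negbTE n_even) expr0 mul1r.
set Pp := map_mx polyC P.
have conj_char : Pp *m char_poly_mx (- M) = char_poly_mx M *m Pp.
  by rewrite /char_poly_mx map_mxN opprK mulmxDr mulmxBl scalar_mxC -map_mxM PM map_mxN map_mxM.
have detP0 : \det Pp != 0 by rewrite det_map_mx polyC_eq0 -unitfE -unitmxE.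
by move: (congr1 determinant conj_char); rewrite !det_mulmx mulrC => /(mulIf detP0).
Qed.

End EvenCharPoly.

Section QuadraticForm.
Variable R : comPzRingType.

Definition qform n (v : 'rV[R]_n) (M : 'M[R]_n) : R := (v *m M *m v^T) 0 0.
Definition sqnorm n (v : 'rV[R]_n) : R := (v *m v^T) 0 0.

Lemma qformD n (v : 'rV[R]_n) M N : qform v (M + N) = qform v M + qform v N.
Proof. by rewrite /qform mulmxDr mulmxDl mxE. Qed.

Lemma qformN n (v : 'rV[R]_n) M : qform v (- M) = - qform v M.
Proof. by rewrite /qform mulmxN mulNmx mxE. Qed.

Lemma qformZ n (v : 'rV[R]_n) a M : qform v (a *: M) = a * qform v M.
Proof. by rewrite /qform -scalemxAr -scalemxAl mxE. Qed.

Lemma qform_scalar n (v : 'rV[R]_n) a : qform v a%:M = a * sqnorm v.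
Proof. by rewrite /qform mul_mx_scalar -scalemxAl mxE. Qed.

Lemma qform_gram n p (v : 'rV[R]_n) (P : 'M[R]_(n, p)) :
  qform v (P *m P^T) = sqnorm (v *m P).
Proof. by rewrite /qform /sqnorm trmx_mul !mulmxA. Qed.

Lemma qform_block_diag n1 n2 (v1 : 'rV[R]_n1) (v2 : 'rV[R]_n2) M1 M2 :
  qform (row_mx v1 v2) (block_mx M1 0 0 M2) = qform v1 M1 + qform v2 M2.
Proof.
by rewrite /qform mul_row_block !(mulmx0, mul0mx, addr0, add0r) tr_row_mx mul_row_col mxE.
Qed.

Lemma sqnorm_row_mx n1 n2 (v1 : 'rV[R]_n1) (v2 : 'rV[R]_n2) :
  sqnorm (row_mx v1 v2) = sqnorm v1 + sqnorm v2.
Proof. by rewrite /sqnorm tr_row_mx mul_row_col mxE. Qed.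

Lemma qform_eigen n (v : 'rV[R]_n) M a : v *m M = a *: v -> qform v M = a * sqnorm v.
Proof. by rewrite /qform => ->; rewrite -scalemxAl mxE. Qed.

End QuadraticForm.

Section SquaredNorm.
Variable R : realDomainType.

Lemma sqnorm_ge0 n (v : 'rV[R]_n) : 0 <= sqnorm v.
Proof. by rewrite /sqnorm mxE; apply: sumr_ge0 => j _; rewrite mxE -expr2 sqr_ge0. Qed.

Lemma sqnorm_gt0 n (v : 'rV[R]_n) : v != 0 -> 0 < sqnorm v.
Proof.
move=> v0; rewrite lt_def sqnorm_ge0 andbT; apply: contra v0.
rewrite /sqnorm mxE => /eqP/psumr_eq0P sq0.
apply/eqP/matrixP => i j; rewrite ord1 mxE.
have sq_ge0 k : true -> 0 <= v 0 k * v^T k 0 by rewrite mxE -expr2 sqr_ge0.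
have /eqP := sq0 sq_ge0 j isT.
by rewrite mxE mulf_eq0 orbb => /eqP.
Qed.

End SquaredNorm.

Section SpectralGap.
Variables (R : realType) (m : nat).

Lemma qform_Atil_ge (v : 'rV[R]_m) : - 2 * sqnorm v <= qform v (Atil R m).
Proof.
have := congr1 (qform v) (Atil_add2_gram R m).
rewrite qformD qform_scalar qformD !qform_gram => gram.
have := sqnorm_ge0 (v *m (1%:M + shift_mx R m)); have := sqnorm_ge0 (v *m first_mx R m).
lra.
Qed.

Lemma qform_Ahat_le (v : 'rV[R]_m) : qform v (Ahat R m) <= 2 * sqnorm v.
Proof.
have := congr1 (qform v) (Ahat_sub2_gram R m).
rewrite qformD qformN qform_scalar qformD !qform_gram => gram.
have := sqnorm_ge0 (v *m (1%:M + (shift_mx R m)^T)); have := sqnorm_ge0 (v *m last_mx R m).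
lra.
Qed.

Lemma Htil_eigen_gap (c x : R) (v : 'rV[R]_(m + m)) :
  0 <= c -> v != 0 -> v *m Htil m c = x *: v -> 4 * (c - 1) ^+ 2 <= x ^+ 2.
Proof.
move=> c0 v0 eig.
have eig2 : v *m (Htil m c *m Htil m c) = x ^+ 2 *: v.
  by rewrite mulmxA eig -scalemxAl eig scalerA expr2.
have := qform_eigen eig2; have := sqnorm_gt0 v0.
rewrite Htil_sqr -[v]hsubmxK qform_block_diag sqnorm_row_mx.
rewrite !(qformD, qformN, qformZ, qform_scalar).
have := qform_Atil_ge (lsubmx v); have := qform_Ahat_le (rsubmx v).
set a1 := qform _ (Atil R m); set a2 := qform _ (Ahat R m).
set n1 := sqnorm (lsubmx v); set n2 := sqnorm (rsubmx v).
move=> a2_le a1_ge n_pos quad.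
have gap_eq : (x ^+ 2 - 4 * (c - 1) ^+ 2) * (n1 + n2) = 4 * c * (a1 + 2 * n1 + 2 * n2 - a2).
  by rewrite mulrBl -quad; ring.
have : 0 <= 4 * c * (a1 + 2 * n1 + 2 * n2 - a2) by apply: mulr_ge0; lra.
by rewrite -gap_eq pmulr_lge0 // subr_ge0.
Qed.

End SpectralGap.

Section RealEigenvector.
Variable R : rcfType.
Local Notation toC := (real_complex R).

Lemma map_mx_scalar_mulmx (f : {scalar Rcomplex R}) n p q
    (v : 'M[R[i]]_(n, p)) (M : 'M[R]_(p, q)) :
  map_mx f (v *m map_mx toC M) = map_mx f v *m M.
Proof.
apply/matrixP => i j; rewrite !mxE (linear_sum f); apply: eq_bigr => k _; rewrite !mxE.
have -> : v i k * (toC (M k j)) = M k j *: (v i k : Rcomplex R).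
  by case: (v i k) => a b; rewrite /GRing.scale /=; congr (_ +i* _)%C; ring.
by rewrite scalarZ mulrC.
Qed.

Lemma real_eigenvector n (M : 'M[R]_n) (x : R) :
  eigenvalue (map_mx toC M) (toC x) -> exists2 v : 'rV[R]_n, v != 0 & v *m M = x *: v.
Proof.
move=> /eigenvalueP [w eig w0].
have part_eig (f : {scalar Rcomplex R}) : map_mx f w *m M = x *: map_mx f w.
  rewrite -map_mx_scalar_mulmx eig; apply/matrixP => i j; rewrite !mxE.
  have -> : toC x * w i j = x *: (w i j : Rcomplex R).
    by case: (w i j) => a b; rewrite /GRing.scale /=; congr (_ +i* _)%C; ring.
  by rewrite scalarZ.
have [Re_w0|] := eqVneq (map_mx (@complex.Re R) w) 0; last by exists (map_mx (@complex.Re R) w).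
have [Im_w0|] := eqVneq (map_mx (@complex.Im R) w) 0; last by exists (map_mx (@complex.Im R) w).
case/eqP: w0; apply/matrixP => i j; move/matrixP: Re_w0 => /(_ i j); move/matrixP: Im_w0 => /(_ i j).
by rewrite !mxE; case: (w i j) => a b /= -> ->.
Qed.

End RealEigenvector.

Section AtilEigenvector.
Variable R : realType.

Definition mode_angle n : R := pi / 2 / n.+1%:R.
Definition sin_mode n (r : R) : R := sin ((r + 1 / 2) * mode_angle n).
Definition Atil_mode n : 'rV[R]_n.+1 := \row_(k < n.+1) ((-1) ^+ k * sin_mode n k%:R).

Lemma sin_mode_rec n r :
  sin_mode n (r - 1) + sin_mode n (r + 1) = 2 * cos (mode_angle n) * sin_mode n r.
Proof.
rewrite /sin_mode.
have -> : (r - 1 + 1 / 2) * mode_angle n = (r + 1 / 2) * mode_angle n - mode_angle n by ring.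
have -> : (r + 1 + 1 / 2) * mode_angle n = (r + 1 / 2) * mode_angle n + mode_angle n by ring.
by rewrite sinB sinD; ring.
Qed.

Lemma sin_mode_first n : sin_mode n (-1) = - sin_mode n 0.
Proof. by rewrite /sin_mode -sinN; congr sin; field. Qed.

Lemma sin_mode_last n : sin_mode n n.+1%:R = sin_mode n n%:R.
Proof.
rewrite /sin_mode /mode_angle.
have n1_neq0 : (n.+1%:R : R) != 0 by rewrite pnatr_eq0.
pose h : R := 1 / 2 * (pi / 2 / n.+1%:R).
have -> : (n.+1%:R + 1 / 2) * (pi / 2 / n.+1%:R) = h + pi / 2 :> R.
  by rewrite /h; field; rewrite nat1r.
have -> : (n%:R + 1 / 2) * (pi / 2 / n.+1%:R) = pi / 2 - h :> R.
  by rewrite /h; field; rewrite nat1r.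
by rewrite sinDpihalf sinB sin_pihalf cos_pihalf mul1r mul0r subr0.
Qed.

Lemma mode_angle_gt0 n : 0 < mode_angle n.
Proof. by rewrite divr_gt0 ?ltr0n // divr_gt0 // pi_gt0. Qed.

Lemma mode_angle_le_pihalf n : mode_angle n <= pi / 2.
Proof.
rewrite /mode_angle ler_pdivrMr ?ltr0n // ler_peMr ?ler1n //.
by rewrite divr_ge0 // ltW // pi_gt0.
Qed.

Lemma Atil_mode_neq0 n : Atil_mode n != 0.
Proof.
apply/eqP => /matrixP /(_ 0 0); rewrite !mxE expr0 mul1r /sin_mode add0r => sin0.
have := mode_angle_gt0 n; have := mode_angle_le_pihalf n; have := pi_gt0 R => ? ? ?.
have : 0 < sin (1 / 2 * mode_angle n) by apply: sin_gt0_pihalf; apply/andP; split; lra.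
by rewrite sin0 ltxx.
Qed.

(* The sine recurrence gives the interior rows; the boundary values
   [sin_mode_first] and [sin_mode_last] absorb the corner entries [1] and
   [-1] of [Atil]. *)
Lemma Atil_modeP n :
  Atil_mode n *m Atil R n.+1 = (- (2 * cos (mode_angle n))) *: Atil_mode n.
Proof.
pose g k := (-1) ^+ k * sin_mode n k%:R.
rewrite Atil_shiftE !(mulmxDr, mulmxBr, mulmxN) -[Atil_mode n]/(\row_k g k).
rewrite !(row_mul_shift, row_mul_tr_shift, row_mul_first, row_mul_last).
apply/rowP => j; rewrite !mxE {}/g.
have last := sin_mode_last n.
case: j => [[|j'] lt_j] /=.
- have := sin_mode_rec n 0; rewrite sub0r add0r sin_mode_first => first.
  case: n lt_j first last => [|n] lt_j first last /=; rewrite ?expr0 ?expr1.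
  + by move: first; rewrite last; lra.
  + lra.
- have interior : sin_mode n j'%:R + sin_mode n j'.+2%:R =
                   2 * cos (mode_angle n) * sin_mode n j'.+1%:R.
    have pred_j : (j'.+1%:R - 1 : R) = j'%:R by rewrite -natr1 addrK.
    by rewrite -sin_mode_rec pred_j natr1.
  rewrite !exprS; case: (ltnP j'.+2 n.+1) => lt_j2.
  + have -> : (j'.+1 == n) = false by apply/negbTE; lia.
    have := congr1 (fun z => (-1) ^+ j' * z) interior => /=; lra.
  + have en : n = j'.+1 by lia.
    subst n; rewrite eqxx /=; move: interior; rewrite last => interior.
    have := congr1 (fun z => (-1) ^+ j' * z) interior => /=; rewrite !exprS; lra.
Qed.

(* Halving the angle at least halves [1 - cos]: [1 - cos y <= 1 - cos y ^+ 2
   = (1 - cos (2 y)) / 2] for [0 <= cos y <= 1]. *)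
Lemma one_sub_cos_halving k : 1 - cos (pi / 2 / (2 ^ k)%:R) <= ((2 ^ k)%:R)^-1 :> R.
Proof.
elim: k => [|k IH]; first by rewrite expn0 divr1 cos_pihalf subr0 invr1.
set y := pi / 2 / (2 ^ k.+1)%:R.
have pow_gt0 : (0 : R) < (2 ^ k)%:R by rewrite ltr0n expn_gt0.
have double_y : pi / 2 / (2 ^ k)%:R = y *+ 2.
  by rewrite /y expnS natrM -mulr_natr; field; rewrite pnatr_eq0; lia.
have y_ge0 : 0 <= y by rewrite /y divr_ge0 // ltW // divr_gt0 // pi_gt0.
have y_le : y <= pi / 2.
  rewrite /y ler_pdivrMr ?ltr0n ?expn_gt0 // ler_peMr ?ler1n ?expn_gt0 //.
  by rewrite divr_ge0 // ltW // pi_gt0.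
have cos_y_ge0 : 0 <= cos y.
  by apply: cos_ge0_pihalf; rewrite y_le andbT; have := pi_gt0 R; lra.
have := cos_le1 y; rewrite double_y cos_mulr2n in IH.
rewrite expnS natrM invfM mulrC; move: IH; set t := ((2 ^ k)%:R : R)^-1.
rewrite -[(2%:R : R)^-1]div1r; nra.
Qed.

Lemma cos_mode_angle_near1 (e : R) : 0 < e -> exists n, 1 - cos (mode_angle n) < e.
Proof.
move=> e_gt0; pose N := Num.bound e^-1.
have N_gt : e^-1 < N%:R by apply: archi_boundP; rewrite invr_ge0 ltW.
exists (2 ^ N).-1; rewrite /mode_angle prednK ?expn_gt0 //.
apply: (le_lt_trans (one_sub_cos_halving N)).
rewrite invf_plt ?posrE ?ltr0n ?expn_gt0 //.
by apply: (lt_trans N_gt); rewrite ltr_nat ltn_expl.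
Qed.

End AtilEigenvector.

Section AnticommutingSquareRoot.
Variables (R : comPzRingType) (n : nat) (M P : 'M[R]_n).
Hypotheses (PM : P *m M = - (M *m P)) (PP : P *m P = - 1%:M).

Lemma eigen_anticomm (u : 'rV[R]_n) l : u != 0 -> u *m M = l *: u ->
  u *m P != 0 /\ (u *m P) *m M = (- l) *: (u *m P).
Proof.
move=> u0 eig; split.
  apply: contra u0 => /eqP uP0; have := congr1 (mulmxr P) uP0.
  by rewrite /= -mulmxA PP mulmxN mulmx1 mul0mx => /eqP; rewrite oppr_eq0.
by rewrite -mulmxA PM mulmxN mulmxA eig -scalemxAl scaleNr.
Qed.

(* If [w M^2 = l^2 w], then either [w M + l w] is an eigenvector for [l], or
   [w] is one for [- l] and [w P] is one for [l]. *)
Lemma eigen_of_sqr (w : 'rV[R]_n) l : w != 0 -> w *m (M *m M) = l ^+ 2 *: w ->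
  exists2 u : 'rV[R]_n, u != 0 & u *m M = l *: u.
Proof.
move=> w0 eig2; have [wl0|wl_neq0] := eqVneq (w *m M + l *: w) 0.
  have eigN : w *m M = (- l) *: w by rewrite scaleNr; apply/eqP; rewrite -addr_eq0 wl0.
  have [wP0 eigP] := eigen_anticomm w0 eigN.
  by exists (w *m P); rewrite // eigP opprK.
exists (w *m M + l *: w) => //.
by rewrite mulmxDl -mulmxA eig2 -scalemxAl scalerDr scalerA -expr2 addrC.
Qed.

End AnticommutingSquareRoot.

Lemma eigenvalue_map_mx (F K : fieldType) (f : {rmorphism F -> K}) n
    (M : 'M[F]_n) (u : 'rV_n) l :
  u != 0 -> u *m M = l *: u -> eigenvalue (map_mx f M) (f l).
Proof.
move=> u0 eig; apply/eigenvalueP; exists (map_mx f u).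
  by rewrite -map_mxM eig map_mxZ.
by rewrite map_mx_eq0.
Qed.

Section HtilSpectrum.
Variable R : realType.
Local Notation toC := (real_complex R).

Lemma char_poly_HtilC_even m (c : R) :
  char_poly (HtilC m c) \Po (- 'X) = char_poly (HtilC m c).
Proof.
apply: (@char_poly_even _ _ _ (map_mx toC (pairing_mx R m))); last by rewrite oddD addbb.
  by rewrite -map_mxM pairing_mx_anticomm map_mxN map_mxM.
rewrite map_unitmx.
have : pairing_mx R m *m (- pairing_mx R m) = 1%:M by rewrite mulmxN pairing_mx_sqr opprK.
by case/mulmx1_unit.
Qed.

Lemma HtilC_eigenvalue_gap m (c x : R) :
  0 <= c -> eigenvalue (HtilC m c) (toC x) -> 2 * `|c - 1| <= `|x|.
Proof.
move=> c0 /real_eigenvector [v v0 eig].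
rewrite -(ler_pXn2r (_ : (0 < 2)%N)) ?nnegrE ?normr_ge0 ?mulr_ge0 //.
rewrite exprMn !real_normK ?num_real // [2 ^+ 2]expr2 -natrM.
exact: Htil_eigen_gap c0 v0 eig.
Qed.

Lemma HtilC_mode_eigenvalues n (c l : R) :
  l ^+ 2 = 4 + 4 * c ^+ 2 - 8 * c * cos (mode_angle R n) ->
  eigenvalue (HtilC n.+1 c) (toC l) /\ eigenvalue (HtilC n.+1 c) (toC (- l)).
Proof.
move=> l2; set w : 'rV[R]_(n.+1 + n.+1) := row_mx (Atil_mode R n) 0.
have w0 : w != 0.
  by apply: contraNneq (Atil_mode_neq0 R n); rewrite -row_mx0 => /eq_row_mx [-> _].
have eig2 : w *m (Htil n.+1 c *m Htil n.+1 c) = l ^+ 2 *: w.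
  rewrite Htil_sqr mul_row_block !(mulmx0, mul0mx, addr0, add0r) mulmxDr mul_mx_scalar.
  rewrite -scalemxAr Atil_modeP scalerA -scalerDl scale_row_mx scaler0 l2.
  by congr (row_mx (_ *: _) 0); ring.
have [u u0 eig] := eigen_of_sqr (@pairing_mx_anticomm R n.+1 c) (pairing_mx_sqr R n.+1) w0 eig2.
have [uP0 eigN] := eigen_anticomm (@pairing_mx_anticomm R n.+1 c) (pairing_mx_sqr R n.+1) u0 eig.
by split; apply: eigenvalue_map_mx; [exact: u0 | exact: eig | exact: uP0 | exact: eigN].
Qed.

Lemma HtilC_eigenvalues_near_edge (c e : R) : 0 <= c -> 2 * `|c - 1| < e ->
  exists m, exists2 l : R, 2 * `|c - 1| <= l < e &
    eigenvalue (HtilC m c) (toC l) /\ eigenvalue (HtilC m c) (toC (- l)).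
Proof.
move=> c0 lt_e; set d := 2 * `|c - 1| in lt_e *.
have d_ge0 : 0 <= d by rewrite mulr_ge0.
have d2 : d ^+ 2 = 4 * (c - 1) ^+ 2 by rewrite exprMn real_normK ?num_real //; ring.
have gap_gt0 : 0 < (e ^+ 2 - d ^+ 2) / (8 * c + 1).
  by rewrite divr_gt0 //; [rewrite subr_gt0 ltr_pXn2r // nnegrE; lra | lra].
have [n cos_near] := cos_mode_angle_near1 gap_gt0.
pose l2 := 4 + 4 * c ^+ 2 - 8 * c * cos (mode_angle R n).
have l2_eq : l2 = d ^+ 2 + 8 * c * (1 - cos (mode_angle R n)) by rewrite /l2 d2; ring.
have l2_ge : d ^+ 2 <= l2.
  by rewrite l2_eq lerDl mulr_ge0 ?subr_ge0 ?cos_le1 ?mulr_ge0.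
have l2_lt : l2 < e ^+ 2.
  rewrite l2_eq -ltrBrDl; move: cos_near; rewrite ltr_pdivlMr; last lra.
  have := cos_le1 (mode_angle R n); nra.
have l2_ge0 : 0 <= l2 by apply: le_trans l2_ge; rewrite sqr_ge0.
have sqrt_sqr (x : R) : 0 <= x -> Num.sqrt (x ^+ 2) = x by move=> ?; rewrite sqrtr_sqr ger0_norm.
exists n.+1, (Num.sqrt l2); last by apply: HtilC_mode_eigenvalues; rewrite sqr_sqrtr.
rewrite -{1}(sqrt_sqr d) // -(sqrt_sqr e) ?ler_sqrt ?ltr_sqrt ?l2_ge ?l2_lt ?exprn_gt0 //; lra.
Qed.

End HtilSpectrum.

Theorem theorem5p2 (R : realType) (c : R) (hc : 0 <= c) :
  (forall (m : nat) (lam : R[i]),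
      mup lam (char_poly (HtilC m c)) = mup (- lam) (char_poly (HtilC m c))) /\
  (forall (m : nat) (x : R),
      eigenvalue (HtilC m c) (x%:C)%C -> ~ (- (2 * `|c - 1|) < x < 2 * `|c - 1|)) /\
  (forall a b : R, a < 0 < b ->
      (forall (m : nat) (x : R), a < x < b -> ~ eigenvalue (HtilC m c) (x%:C)%C) ->
      - (2 * `|c - 1|) <= a /\ b <= 2 * `|c - 1|).
Proof.
split; [|split].
- move=> m lam; apply: mup_even_poly; last exact: char_poly_HtilC_even.
  exact: monic_neq0 (char_poly_monic _).
- move=> m x /(HtilC_eigenvalue_gap hc); rewrite ler_normr => /orP[] ? /andP[? ?]; lra.
- move=> a b /andP[a_lt0 b_gt0] no_eig; have norm_ge0 := normr_ge0 (c - 1).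
  split; rewrite leNgt; apply/negP => edge_lt.
  + have lt_a : 2 * `|c - 1| < - a by lra.
    have [m [l /andP[d_le l_lt] [_ eigN]]] := HtilC_eigenvalues_near_edge hc lt_a.
    by apply: (no_eig m (- l)) eigN; apply/andP; split; lra.
  + have [m [l /andP[d_le l_lt] [eig _]]] := HtilC_eigenvalues_near_edge hc edge_lt.
    by apply: (no_eig m l) eig; apply/andP; split; lra.
Qed.
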